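(* For every integer $n\ge3$, $c_n\ge(\sqrt3/2)^{\varphi(n)}$ (with equality for $n=3$ and $n=6$).
   Context: For $n\ge1$, $\phi_n(X)$ denotes the $n$-th cyclotomic polynomial, of degree $\varphi(n)$ (Euler's totient). For $n\ge3$, $c_n=\inf_{t\in\mathbb R}\phi_n(t)$. *)

(* Real numbers are modelled by an arbitrary real closed field R
   (the statement is first-order, so this is a generalisation of the case R = reals). *)
From HB Require Import structures.
From mathcomp Require Import all_boot all_order all_algebra all_field.
Set Implicit Arguments. Unset Strict Implicit. Unset Printing Implicit Defensive.
Import Order.TTheory GRing.Theory Num.Theory.
Local Open Scope ring_scope.

Definition cyc_eval (R : rcfType) (n : nat) (t : R) : R :=
  (map_poly (intr : int -> R) 'Phi_n).[t].

Definition is_cyc_inf (R : rcfType) (n : nat) (c : R) : Prop :=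
  (forall t : R, c <= cyc_eval n t) /\
  (forall c' : R, (forall t : R, c' <= cyc_eval n t) -> c' <= c).

From HB Require Import structures.
From mathcomp Require Import all_boot all_order all_algebra all_field.
From mathcomp Require Import ring lra zify.
From Stdlib Require Import Classical.
Set Implicit Arguments.
Unset Strict Implicit.
Unset Printing Implicit Defensive.

Import Order.TTheory GRing.Theory Num.Theory.
Local Open Scope ring_scope.

(* Write th = sqrt 3 / 2.  On [0, 1], for n with two distinct prime factors,
   induction on n gives the two-sided bound th^phi(n) <= Phi_n(x) <= th^-phi(n):
   a repeated prime r reduces r m to m through Phi_(r m)(x) = Phi_m(x^r); a new
   prime q > 2 gives Phi_(q m)(x) = Phi_m(x^q) / Phi_m(x) with phi(q m) >= 2 phi(m);
   and for n = p q (p < q), Phi_(p q)(x) = Phi_p(x^q) / Phi_p(x) where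
   1 <= Phi_p <= p on [0, 1], while p^2 3^t <= 4^t for t = (p-1)(q-1) except for
   n = 6, 10, which are checked by hand.  Prime powers have Phi_n >= 1 on [0, 1].
   The bound reaches x > 1 through Phi_n(x) = x^phi(n) Phi_n(1/x) and x < 0
   through Phi_(2m)(x) = Phi_m(-x) for odd m (Phi_n is even when 4 | n).  The
   cyclotomic identities all follow from prod_(d | n) Phi_d = X^n - 1 by
   induction over divisors.  Equality: Phi_3(-1/2) = Phi_6(1/2) = 3/4. *)

Lemma eq_of_divisor_prods (T : idomainType) (P : pred nat) (f g : nat -> T) :
  (forall d n, (d %| n)%N -> P n -> P d) ->
  (forall n, (0 < n)%N -> P n -> f n != 0) ->
  (forall n, (0 < n)%N -> P n ->
     \prod_(d <- divisors n) f d = \prod_(d <- divisors n) g d) ->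
  forall n, (0 < n)%N -> P n -> f n = g n.
Proof.
move=> Pdvd f_neq0 eq_prod; elim/ltn_ind=> n IH n_gt0 Pn.
have proper_div d : d \in rem n (divisors n) -> [/\ (d < n)%N, (0 < d)%N & P d].
  rewrite mem_rem_uniq ?divisors_uniq // inE => /andP[dn]; rewrite -dvdn_divisors // => ddn.
  by split; [rewrite ltn_neqAle dn dvdn_leq | exact: dvdn_gt0 ddn | exact: Pdvd ddn Pn].
have := eq_prod n n_gt0 Pn.
rewrite (big_rem n) ?divisors_id //= [X in _ = X](big_rem n) ?divisors_id //=.
have -> : \prod_(d <- rem n (divisors n)) g d = \prod_(d <- rem n (divisors n)) f d.
  by apply: eq_big_seq => d /proper_div[*]; rewrite IH.
apply: mulIf; rewrite prodf_seq_neq0; apply/allP => d /proper_div[_ d_gt0 Pd].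
exact: f_neq0.
Qed.

Lemma perm_divisors_primeM p m : prime p -> (0 < m)%N ->
  perm_eq (divisors (p * m))
    ([seq (p * d)%N | d <- divisors m] ++ [seq d <- divisors m | ~~ (p %| d)%N]).
Proof.
move=> p_pr m_gt0; have p_gt0 := prime_gt0 p_pr.
have pm_gt0 : (0 < p * m)%N by rewrite muln_gt0 p_gt0.
apply: uniq_perm; first exact: divisors_uniq.
  rewrite cat_uniq map_inj_uniq ?filter_uniq ?divisors_uniq ?andbT //=; last first.
    by move=> x y /eqP; rewrite eqn_pmul2l // => /eqP.
  apply/hasPn => e; rewrite mem_filter => /andP[pNe _].
  by apply/mapP => -[d _ ed]; move: pNe; rewrite ed dvdn_mulr.
move=> e; rewrite mem_cat mem_filter -!dvdn_divisors //.
apply/idP/idP => [e_dvd | /orP[/mapP[d] | /andP[_ /dvdn_mull //]]]; last first.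
  by rewrite -dvdn_divisors // => dm ->; rewrite dvdn_pmul2l.
have [pe | pNe] := boolP (p %| e)%N.
  apply/orP; left; apply/mapP; exists (e %/ p)%N; last by rewrite mulnC divnK.
  by rewrite -dvdn_divisors // -(dvdn_pmul2l p_gt0) [(p * _)%N]mulnC divnK.
apply/orP; right; move: e_dvd.
by rewrite mulnC Gauss_dvdl // coprime_sym prime_coprime // pNe.
Qed.

Lemma prod_divisors_sign (T : comNzRingType) m : (0 < m)%N ->
  \prod_(d <- divisors m) (if d == 1%N then -1 else 1) = -1 :> T.
Proof.
move=> m_gt0; rewrite (big_rem 1%N) ?divisor1 //= big1_seq ?mulr1 // => d.
by rewrite mem_rem_uniq ?divisors_uniq // inE => /and3P[_ /negPf->].
Qed.

Lemma sum_totient_divisors n : (0 < n)%N -> (\sum_(d <- divisors n) totient d)%N = n.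
Proof.
move=> n_gt0; rewrite -[RHS]cyclic.sum_totient_dvd -(big_mkord (dvdn^~ n)).
rewrite -[RHS]big_filter.
apply: perm_big; apply: uniq_perm; rewrite ?divisors_uniq ?filter_uniq ?iota_uniq // => d.
rewrite mem_filter mem_index_iota -dvdn_divisors //.
by case: (boolP (d %| n)%N) => /= [dn | //]; rewrite ltnS dvdn_leq.
Qed.

Lemma Cyclotomic_neq0 n : 'Phi_n != 0.
Proof. exact: monic_neq0 (Cyclotomic_monic n). Qed.

Lemma Cyclotomic_comp_Xp p m : prime p -> (0 < m)%N ->
  'Phi_m \Po 'X^p = 'Phi_(p * m) * (if (p %| m)%N then 1 else 'Phi_m).
Proof.
move=> p_pr m_gt0; have p_gt0 := prime_gt0 p_pr; symmetry.
pose f d := 'Phi_(p * d) * (if (p %| d)%N then 1 else 'Phi_d).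
apply: (@eq_of_divisor_prods _ predT f (fun d => 'Phi_d \Po 'X^p)) => // [k _ _|k k_gt0 _].
  by rewrite mulf_neq0 ?Cyclotomic_neq0 //; case: ifP; rewrite ?oner_neq0 ?Cyclotomic_neq0.
rewrite -(rmorph_prod (comp_poly _)) /= prod_Cyclotomic //.
rewrite comp_polyB comp_Xn_poly comp_polyC -exprM.
rewrite -prod_Cyclotomic ?muln_gt0 ?p_gt0 // (perm_big _ (perm_divisors_primeM p_pr k_gt0)).
rewrite big_cat /= big_map big_filter big_split /=.
congr (_ * _); rewrite [RHS]big_mkcond.
by apply: eq_bigr => d _; case: ifP.
Qed.

Lemma Cyclotomic1 : 'Phi_1 = 'X - 1.
Proof. by have := prod_Cyclotomic (ltn0Sn 0); rewrite big_seq1 expr1. Qed.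

Lemma Cyclotomic_prime p : prime p -> 'Phi_p = \sum_(i < p) 'X^i.
Proof.
move=> p_pr; have := Cyclotomic_comp_Xp p_pr (ltn0Sn 0).
rewrite muln1 dvdn1 ifF ?Cyclotomic1; last by apply/negbTE; rewrite neq_ltn prime_gt1 ?orbT.
rewrite comp_polyB comp_polyX comp_polyC subrX1 mulrC => /mulIf-> //.
by rewrite -size_poly_eq0 size_XsubC.
Qed.

Lemma prod_Cyclotomic_double_odd m : odd m ->
  \prod_(d <- divisors m) 'Phi_(2 * d) = 'X^m + 1.
Proof.
move=> m_odd; have m_gt0 : (0 < m)%N by case: m m_odd.
have : \prod_(d <- divisors m) ('Phi_d \Po 'X^2) =
       (\prod_(d <- divisors m) 'Phi_(2 * d)) * ('X^m - 1).
  rewrite -prod_Cyclotomic // -big_split /=; apply: eq_big_seq => d.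
  rewrite -dvdn_divisors // => dm; rewrite Cyclotomic_comp_Xp ?(dvdn_gt0 m_gt0) //.
  by rewrite ifF //; apply: contraTF m_odd => /dvdn_trans /(_ dm); rewrite dvdn2.
rewrite -(rmorph_prod (comp_poly _)) /= prod_Cyclotomic // comp_polyB comp_Xn_poly comp_polyC.
rewrite -exprM mulnC exprM (_ : _ - 1 = ('X^m + 1) * ('X^m - 1)); last by ring.
move=> /esym /mulIf-> //.
exact: monic_neq0 (monicXnsubC _ m_gt0).
Qed.

Lemma Cyclotomic_double_odd m : odd m -> (1 < m)%N -> 'Phi_(2 * m) = 'Phi_m \Po - 'X.
Proof.
move=> m_odd m_gt1.
(* The identity holds for all odd k up to a sign at k = 1, which is the form
   that passes to products over divisors. *)
suff signed : forall k, (0 < k)%N -> odd k ->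
    'Phi_(2 * k) * (if k == 1%N then -1 else 1) = 'Phi_k \Po - 'X.
  by rewrite -signed ?(ltnW m_gt1) // ifF ?mulr1 // gtn_eqF.
apply: (@eq_of_divisor_prods _ odd) => [d k /dvdn_odd // | k _ _ | k k_gt0 k_odd].
  by rewrite mulf_neq0 ?Cyclotomic_neq0 //; case: (k == 1%N); rewrite ?oppr_eq0 oner_eq0.
rewrite big_split /= prod_divisors_sign // prod_Cyclotomic_double_odd //.
rewrite -(rmorph_prod (comp_poly _)) /= prod_Cyclotomic // comp_polyB comp_Xn_poly comp_polyC.
by rewrite exprNn -signr_odd k_odd expr1 polyC1; ring.
Qed.

(* Degrees of the identities above, since size 'Phi_n = (totient n).+1. *)
Lemma totient_primeM_dvd p m : prime p -> (0 < m)%N -> (p %| m)%N ->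
  totient (p * m) = (p * totient m)%N.
Proof.
move=> p_pr m_gt0 pm.
have := congr1 (fun q : {poly int} => (size q).-1) (Cyclotomic_comp_Xp p_pr m_gt0).
by rewrite /= size_comp_poly pm mulr1 !size_Cyclotomic size_polyXn mulnC.
Qed.

Lemma totient_primeM_coprime p m : prime p -> (0 < m)%N -> ~~ (p %| m)%N ->
  (totient (p * m) + totient m = p * totient m)%N.
Proof.
move=> p_pr m_gt0 pNm.
have := congr1 (fun q : {poly int} => (size q).-1) (Cyclotomic_comp_Xp p_pr m_gt0).
rewrite /= size_comp_poly (negPf pNm) size_mul ?Cyclotomic_neq0 //.
by rewrite !size_Cyclotomic size_polyXn addnS mulnC => ->.
Qed.

Lemma totient_double_odd m : odd m -> (1 < m)%N -> totient (2 * m) = totient m.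
Proof.
move=> m_odd m_gt1.
have := congr1 (size : {poly int} -> nat) (Cyclotomic_double_odd m_odd m_gt1).
by rewrite size_comp_poly2 ?size_opp ?size_polyX // !size_Cyclotomic => -[].
Qed.

Section CyclotomicValues.
Variable R : rcfType.
Implicit Types x : R.

Lemma cyc_eval_comp_Xp n p x :
  cyc_eval n (x ^+ p) = (map_poly intr ('Phi_n \Po 'X^p)).[x].
Proof. by rewrite map_comp_poly horner_comp map_polyXn hornerXn. Qed.

Lemma cyc_eval_primeM_dvd p m x : prime p -> (0 < m)%N -> (p %| m)%N ->
  cyc_eval (p * m) x = cyc_eval m (x ^+ p).
Proof. by move=> p_pr m_gt0 pm; rewrite cyc_eval_comp_Xp Cyclotomic_comp_Xp // pm mulr1. Qed.

Lemma cyc_eval_primeM_coprime p m x : prime p -> (0 < m)%N -> ~~ (p %| m)%N ->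
  cyc_eval (p * m) x * cyc_eval m x = cyc_eval m (x ^+ p).
Proof.
move=> p_pr m_gt0 pNm.
by rewrite cyc_eval_comp_Xp Cyclotomic_comp_Xp // (negPf pNm) rmorphM hornerM.
Qed.

Lemma cyc_eval_prime p x : prime p -> cyc_eval p x = \sum_(i < p) x ^+ i.
Proof.
move=> p_pr; rewrite /cyc_eval Cyclotomic_prime // rmorph_sum horner_sum.
by apply: eq_bigr => i _; rewrite /= map_polyXn hornerXn.
Qed.

Lemma cyc_eval_double_odd m x : odd m -> (1 < m)%N ->
  cyc_eval (2 * m) x = cyc_eval m (- x).
Proof.
move=> m_odd m_gt1; rewrite /cyc_eval Cyclotomic_double_odd // map_comp_poly.
by rewrite horner_comp rmorphN /= map_polyX hornerN hornerX.
Qed.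

Lemma prod_cyc_eval n x : (0 < n)%N ->
  \prod_(d <- divisors n) cyc_eval d x = x ^+ n - 1.
Proof.
move=> n_gt0; rewrite -horner_prod -rmorph_prod prod_Cyclotomic //.
by rewrite rmorphB rmorph1 /= map_polyXn !hornerE.
Qed.

Lemma cyc_eval_neq0 n x : 1 < x -> (0 < n)%N -> cyc_eval n x != 0.
Proof.
move=> x_gt1 n_gt0; have : x ^+ n - 1 != 0 by rewrite subr_eq0 gt_eqF ?exprn_egt1 -?lt0n.
rewrite -prod_cyc_eval // prodf_seq_neq0 => /allP; apply; exact: divisors_id.
Qed.

Lemma cyc_eval_inv n x : 1 < x -> (1 < n)%N ->
  cyc_eval n x = x ^+ totient n * cyc_eval n x^-1.
Proof.
move=> x_gt1 n_gt1; have x_neq0 : x != 0 by rewrite gt_eqF // (lt_trans ltr01).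
suff signed : forall k, (0 < k)%N -> predT k ->
    cyc_eval k x = x ^+ totient k * cyc_eval k x^-1 * (if k == 1%N then -1 else 1).
  by rewrite signed ?(ltnW n_gt1) // ifF ?mulr1 // gtn_eqF.
apply: (@eq_of_divisor_prods _ predT) => // [k k_gt0 _ | k k_gt0 _].
  exact: cyc_eval_neq0.
rewrite prod_cyc_eval // !big_split /= prod_divisors_sign // prod_cyc_eval //.
rewrite -(big_morph _ (exprD x) (expr0 x)) sum_totient_divisors //.
by rewrite mulrN1 mulrBr mulr1 -exprMn mulfV // expr1n opprB.
Qed.

End CyclotomicValues.

Lemma exp3_mul_le_exp4 a m : (8 <= m)%N -> (a <= m.+1)%N -> (a * 3 ^ m <= 4 ^ m)%N.
Proof.
move=> m_ge8 a_le; apply: leq_trans (leq_mul a_le (leqnn _)) _.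
elim: m m_ge8 {a_le} => // m IH; rewrite leq_eqVlt => /orP[/eqP <- // | ].
rewrite ltnS => /[dup] m_ge8 /IH; rewrite !expnS.
set t := (3 ^ m)%N; set u := (4 ^ m)%N; nia.
Qed.

Lemma two_primes_exp_bound p q : prime p -> prime q -> (p < q)%N ->
  (p, q) \notin [:: (2, 3); (2, 5)]%N ->
  (p ^ 2 * 3 ^ (p.-1 * q.-1) <= 4 ^ (p.-1 * q.-1))%N.
Proof.
move=> p_pr q_pr pq; rewrite !inE !xpair_eqE.
have [p_gt1 q_gt1] := (prime_gt1 p_pr, prime_gt1 q_pr).
have [p2 | p_neq2] := eqVneq p 2%N.
  rewrite p2 /= => q_neq35; have q_gt6 : (6 < q)%N.
    by move: q_pr pq q_neq35 {q_gt1}; rewrite p2; case: q => [|[|[|[|[|[|[|q]]]]]]].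
  rewrite mul1n; have [t_ge8 | t_lt8] := leqP 8 q.-1.
    by apply: exp3_mul_le_exp4; lia.
  by have [->|->] : q.-1 = 6%N \/ q.-1 = 7%N by lia.
move=> _; have p_odd : odd p by case/even_prime: p_pr p_neq2 => [->|].
have q_odd : odd q by case/even_prime: q_pr => [q2|//]; lia.
have q_neq : q != p.+1 by apply: contraTneq q_odd => ->; rewrite /= p_odd.
have p_gt2 : (2 < p)%N by rewrite ltn_neqAle eq_sym p_neq2 p_gt1.
apply: exp3_mul_le_exp4; nia.
Qed.

Definition has_sq_prime_factor n := exists2 r, prime r & (r * r %| n)%N.

Definition two_prime_divisors n :=
  exists p q, [/\ prime p, prime q, (p < q)%N, (p %| n)%N & (q %| n)%N].

Lemma sq_prime_factor_split r n : prime r -> (r * r %| n)%N -> (0 < n)%N ->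
  [/\ n = (r * (n %/ r))%N, (r %| n %/ r)%N, (1 < n %/ r)%N & (n %/ r < n)%N].
Proof.
move=> r_pr rrn n_gt0; have r_gt1 := prime_gt1 r_pr.
have rn : (r %| n)%N := dvdn_trans (dvdn_mulr r (dvdnn r)) rrn.
have n_eq : n = (r * (n %/ r))%N by rewrite mulnC divnK.
have r_dvd : (r %| n %/ r)%N by rewrite -(dvdn_pmul2l (ltnW r_gt1)) -n_eq.
have m_gt0 : (0 < n %/ r)%N by rewrite divn_gt0 ?prime_gt0 // dvdn_leq.
split=> //; last by rewrite ltn_Pdiv.
exact: leq_trans r_gt1 (dvdn_leq m_gt0 r_dvd).
Qed.

Lemma prime_dvd_sq_div r s n : prime r -> prime s -> (r * r %| n)%N -> (0 < n)%N ->
  (s %| n)%N -> (s %| n %/ r)%N.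
Proof.
move=> r_pr s_pr rrn n_gt0 sn.
have [n_eq r_dvd _ _] := sq_prime_factor_split r_pr rrn n_gt0.
have [-> // | s_neq_r] := eqVneq s r.
by move: sn; rewrite {1}n_eq Gauss_dvdr // prime_coprime // dvdn_prime2.
Qed.

Lemma prime_of_no_sq_factor n : (1 < n)%N ->
  ~ has_sq_prime_factor n -> ~ two_prime_divisors n -> prime n.
Proof.
move=> n_gt1 no_sq no_two; have p_pr := pdiv_prime n_gt1; set p := pdiv n in p_pr *.
have n_eq : n = (p * (n %/ p))%N by rewrite mulnC divnK // pdiv_dvd.
have [k_le1 | k_gt1] := leqP (n %/ p) 1.
  by move: n_eq n_gt1; case: (n %/ p)%N k_le1 => [|[]] // _ ->; rewrite ?muln0 ?muln1.
have s_pr := pdiv_prime k_gt1; set s := pdiv (n %/ p) in s_pr *.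
have s_dvd : (s %| n %/ p)%N by apply: pdiv_dvd.
have [s_eq | s_neq] := eqVneq s p.
  case: no_sq; exists p => //.
  by rewrite [X in (_ %| X)%N]n_eq dvdn_pmul2l ?prime_gt0 // -{1}s_eq.
have s_dvd_n : (s %| n)%N by rewrite [X in (_ %| X)%N]n_eq dvdn_mull.
case: no_two; exists p, s; split=> //.
  by rewrite ltn_neqAle eq_sym s_neq pdiv_min_dvd ?prime_gt1.
exact: pdiv_dvd.
Qed.

Section UnitIntervalBounds.
Variable R : rcfType.
Implicit Types x t : R.
Local Notation th := (Num.sqrt 3 / 2 : R).

Lemma th_gt0 : 0 < th.
Proof. by rewrite divr_gt0 // sqrtr_gt0. Qed.

Lemma th_sqr : th ^+ 2 = 3 / 4.
Proof. by rewrite expr_div_n sqr_sqrtr // -natrX. Qed.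

Lemma th_le1 : th <= 1.
Proof. by have := th_sqr; have := th_gt0; nra. Qed.

Lemma thX_ge0 n : 0 <= th ^+ n.
Proof. exact: exprn_ge0 (ltW th_gt0). Qed.

Lemma thX_le1 n : th ^+ n <= 1.
Proof. exact: exprn_ile1 (ltW th_gt0) th_le1. Qed.

Lemma thX_decr m n : (m <= n)%N -> th ^+ n <= th ^+ m.
Proof. exact: (ler_wiXn2l (ltW th_gt0) th_le1). Qed.

Lemma unit_exprn x n : 0 <= x <= 1 -> 0 <= x ^+ n <= 1.
Proof. by case/andP=> x_ge0 x_le1; rewrite exprn_ge0 ?exprn_ile1. Qed.

Lemma geometric_sum_bounds p x : (0 < p)%N -> 0 <= x <= 1 ->
  1 <= \sum_(i < p) x ^+ i <= p%:R.
Proof.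
case: p => // p _ /andP[x_ge0 x_le1]; apply/andP; split.
  by rewrite big_ord_recl lerDl sumr_ge0 // => i _; rewrite exprn_ge0.
rewrite -[X in _ <= X%:R]card_ord -sumr_const ler_sum // => i _.
exact: exprn_ile1.
Qed.

Lemma geometric_sum_Xp p q x : (0 < q)%N -> 0 <= x <= 1 ->
  \sum_(i < p) (x ^+ q) ^+ i <= \sum_(i < p) x ^+ i.
Proof.
case: q => // q _ x01; apply: ler_sum => i _.
have /andP[y_ge0 y_le1] := unit_exprn i x01.
by rewrite -exprM mulnC exprM exprS ler_piMr // exprn_ile1.
Qed.

Lemma th_exp_two_primes_le1 p q : prime p -> prime q -> (p < q)%N ->
  (p, q) \notin [:: (2, 3); (2, 5)]%N -> th ^+ (p.-1 * q.-1) * p%:R <= 1.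
Proof.
move=> p_pr q_pr pq pq_ok; set t := (p.-1 * q.-1)%N.
have := two_primes_exp_bound p_pr q_pr pq pq_ok; rewrite -(ler_nat R) natrM !natrX -/t.
move=> bound; have sq_le1 : (th ^+ t * p%:R) ^+ 2 <= 1.
  rewrite exprMn -exprM mulnC exprM th_sqr expr_div_n mulrAC.
  by rewrite ler_pdivrMr ?exprn_gt0 // mul1r mulrC.
have := thX_ge0 t; have : 0 <= p%:R :> R by []; nra.
Qed.

Lemma geometric_two_primes_lower p q x :
  prime p -> prime q -> (p < q)%N -> 0 <= x <= 1 ->
  th ^+ (p.-1 * q.-1) * \sum_(i < p) x ^+ i <= \sum_(i < p) (x ^+ q) ^+ i.
Proof.
move=> p_pr q_pr pq x01.
have [_ B_le] := andP (geometric_sum_bounds (prime_gt0 p_pr) x01).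
have [A_ge1 _] := andP (geometric_sum_bounds (prime_gt0 p_pr) (unit_exprn q x01)).
have [|pq_ok] := boolP ((p, q) \in [:: (2, 3); (2, 5)]%N); last first.
  apply: le_trans A_ge1; apply: le_trans (th_exp_two_primes_le1 p_pr q_pr pq pq_ok).
  by rewrite ler_wpM2l ?thX_ge0.
have /andP[x_ge0 x_le1] := x01.
rewrite !inE !xpair_eqE => /orP[] /andP[/eqP-> /eqP->] /=.
all: rewrite !big_ord_recr !big_ord0 /= !expr0 !expr1 !add0r mul1n.
- (* Equality at x = 1/2: this is the extremal case n = 6. *)
  rewrite th_sqr (_ : (x ^+ 3) = x * x * x); last by rewrite !exprS expr0 mulr1 mulrA.
  have : 0 <= (x + 1) * (2 * x - 1) ^+ 2 by rewrite mulr_ge0 ?sqr_ge0 //; lra.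
  rewrite expr2; nra.
- rewrite (_ : 4 = 2 * 2)%N // exprM th_sqr.
  have x5_ge0 : 0 <= x ^+ 5 by rewrite exprn_ge0.
  have [x_le | x_gt] := lerP x (3 / 4); first lra.
  have : (3 / 4) ^+ 5 <= x ^+ 5 by rewrite lerXn2r ?nnegrE ?ltW //; lra.
  rewrite !exprS expr0 !mulr1; lra.
Qed.

(* The upper bound is what bounds the quotient Phi_m(x^q) / Phi_m(x) from below;
   it fails for primes (Phi_p(1) = p), hence the two_prime_divisors hypothesis
   in the induction. *)
Definition two_sided_bound n := forall x, 0 <= x <= 1 ->
  th ^+ totient n <= cyc_eval n x /\ cyc_eval n x * th ^+ totient n <= 1.

Lemma two_sided_bound_primeM_dvd r m : prime r -> (0 < m)%N -> (r %| m)%N ->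
  two_sided_bound m -> two_sided_bound (r * m).
Proof.
move=> r_pr m_gt0 rm bound_m x x01.
rewrite cyc_eval_primeM_dvd // totient_primeM_dvd //.
have [lo hi] := bound_m _ (unit_exprn r x01).
have le : th ^+ (r * totient m) <= th ^+ totient m by rewrite thX_decr ?leq_pmull ?prime_gt0.
split; first exact: le_trans le lo.
by apply: le_trans hi; rewrite ler_wpM2l // (le_trans (thX_ge0 _) lo).
Qed.

Lemma two_sided_bound_primeM_coprime q m : prime q -> (2 < q)%N -> (0 < m)%N ->
  ~~ (q %| m)%N -> two_sided_bound m -> two_sided_bound (q * m).
Proof.
move=> q_pr q_gt2 m_gt0 qNm bound_m x x01.
have := cyc_eval_primeM_coprime x q_pr m_gt0 qNm.
have := totient_primeM_coprime q_pr m_gt0 qNm.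
have [lo hi] := bound_m x x01; have [lo' hi'] := bound_m _ (unit_exprn q x01).
move: lo hi lo' hi'; set c := cyc_eval (q * m) x; set b := cyc_eval m x.
set a := cyc_eval m (x ^+ q); set t := totient (q * m); set u := th ^+ totient m.
move=> lo hi lo' hi' t_eq cba.
have u_gt0 : 0 < u by rewrite exprn_gt0 ?th_gt0.
have tu : th ^+ t <= u ^+ 2 by rewrite -exprM thX_decr //; nia.
have c_ge : u ^+ 2 <= c by rewrite expr2; nra.
have cu_le1 : c * u ^+ 2 <= 1 by rewrite expr2; nra.
split; first exact: le_trans tu c_ge.
by apply: le_trans cu_le1; rewrite ler_wpM2l // (le_trans _ c_ge) ?sqr_ge0.
Qed.

Lemma two_sided_bound_two_primes p q : prime p -> prime q -> (p < q)%N ->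
  two_sided_bound (q * p).
Proof.
move=> p_pr q_pr pq x x01; have p_gt0 := prime_gt0 p_pr.
have qNp : ~~ (q %| p)%N by rewrite dvdn_prime2 // gtn_eqF.
have := cyc_eval_primeM_coprime x q_pr p_gt0 qNp.
have := totient_primeM_coprime q_pr p_gt0 qNp.
rewrite !(cyc_eval_prime _ p_pr) (totient_prime p_pr).
set c := cyc_eval (q * p) x; set t := totient (q * p) => t_eq cBA.
have t_def : t = (p.-1 * q.-1)%N.
  move: t_eq; rewrite -[in (q * _)%N](prednK (prime_gt0 q_pr)) mulSn addnC.
  by move=> /addnI->; rewrite mulnC.
have [B_ge1 _] := andP (geometric_sum_bounds p_gt0 x01).
have AB := geometric_sum_Xp p (prime_gt0 q_pr) x01.
have lower := geometric_two_primes_lower p_pr q_pr pq x01.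
rewrite -t_def -cBA in AB lower.
move: (\sum_(i < p) x ^+ i) B_ge1 AB lower => B B_ge1 AB lower.
have th_ge0 := thX_ge0 t; have th_le1 := thX_le1 t.
split; nra.
Qed.

Lemma two_sided_bound_of_two_prime_divisors n : (0 < n)%N ->
  two_prime_divisors n -> two_sided_bound n.
Proof.
elim/ltn_ind: n => n IH n_gt0 two_n; have [p [q [p_pr q_pr pq pn qn]]] := two_n.
have [[r r_pr rrn] | no_sq] := classic (has_sq_prime_factor n).
  have [n_eq r_dvd m_gt1 m_lt] := sq_prime_factor_split r_pr rrn n_gt0.
  rewrite n_eq; apply: two_sided_bound_primeM_dvd (ltnW m_gt1) _ _ => //.
  apply: IH (ltnW m_gt1) _ => //.
  by exists p, q; split; rewrite ?(prime_dvd_sq_div r_pr).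
set m := (n %/ q)%N; have n_eq : n = (q * m)%N by rewrite mulnC divnK.
have qNm : ~~ (q %| m)%N.
  apply/negP => qm; apply: no_sq; exists q => //.
  by rewrite [X in (_ %| X)%N]n_eq dvdn_pmul2l ?prime_gt0.
have pm : (p %| m)%N.
  by move: pn; rewrite n_eq Gauss_dvdr // prime_coprime // dvdn_prime2 // ltn_eqF.
have m_gt1 : (1 < m)%N.
  apply: leq_trans (prime_gt1 p_pr) (dvdn_leq _ pm).
  by rewrite /m divn_gt0 ?prime_gt0 // dvdn_leq.
have q_gt2 : (2 < q)%N by apply: leq_trans pq; apply: prime_gt1.
rewrite n_eq; have [two_m | not_two_m] := classic (two_prime_divisors m).
  apply: two_sided_bound_primeM_coprime (ltnW m_gt1) _ _ => //.
  by apply: IH two_m; rewrite ?(ltnW m_gt1) // /m ltn_Pdiv ?prime_gt1.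
have no_sq_m : ~ has_sq_prime_factor m.
  by case=> r r_pr rrm; apply: no_sq; exists r; rewrite // n_eq dvdn_mull.
have m_pr := prime_of_no_sq_factor m_gt1 no_sq_m not_two_m.
have -> : m = p by apply/eqP; rewrite eq_sym -dvdn_prime2.
exact: two_sided_bound_two_primes.
Qed.

Lemma cyc_eval_unit_lower n x : (1 < n)%N -> 0 <= x <= 1 ->
  th ^+ totient n <= cyc_eval n x.
Proof.
elim/ltn_ind: n x => n IH x n_gt1 x01.
have [two_n | not_two_n] := classic (two_prime_divisors n).
  by case: (two_sided_bound_of_two_prime_divisors (ltnW n_gt1) two_n x01).
have [[r r_pr rrn] | no_sq] := classic (has_sq_prime_factor n).
  have [n_eq r_dvd m_gt1 m_lt] := sq_prime_factor_split r_pr rrn (ltnW n_gt1).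
  rewrite n_eq cyc_eval_primeM_dvd ?totient_primeM_dvd ?(ltnW m_gt1) //.
  apply: le_trans (IH _ m_lt _ m_gt1 (unit_exprn r x01)).
  by rewrite thX_decr // leq_pmull ?prime_gt0.
have n_pr := prime_of_no_sq_factor n_gt1 no_sq not_two_n.
rewrite cyc_eval_prime // totient_prime //.
have [sum_ge1 _] := andP (geometric_sum_bounds (prime_gt0 n_pr) x01).
exact: le_trans (thX_le1 _) sum_ge1.
Qed.

Lemma cyc_eval_nonneg_lower n t : (1 < n)%N -> 0 <= t ->
  th ^+ totient n <= cyc_eval n t.
Proof.
move=> n_gt1 t_ge0; have [t_le1 | t_gt1] := lerP t 1.
  by apply: cyc_eval_unit_lower; rewrite ?t_ge0.
have t_gt0 : 0 < t by apply: lt_trans t_gt1.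
have /(cyc_eval_unit_lower n_gt1) lower : 0 <= t^-1 <= 1.
  by rewrite invr_ge0 invf_le1 ?ltW.
rewrite cyc_eval_inv //; have value_ge0 := le_trans (thX_ge0 _) lower.
by apply: le_trans lower _; rewrite ler_peMl // exprn_ege1 // ltW.
Qed.

Lemma cyc_eval_lower n t : (2 < n)%N -> th ^+ totient n <= cyc_eval n t.
Proof.
move=> n_gt2; have n_gt1 := ltnW n_gt2.
have [t_ge0 | t_lt0] := lerP 0 t; first exact: cyc_eval_nonneg_lower.
have mt_ge0 : 0 <= - t by rewrite oppr_ge0 ltW.
have [n_odd | n_even] := boolP (odd n).
  rewrite -[t]opprK -cyc_eval_double_odd // -totient_double_odd //.
  by apply: cyc_eval_nonneg_lower => //; lia.
have n_eq : n = (2 * n./2)%N by rewrite -[LHS]odd_double_half (negPf n_even) -mul2n.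
have m_gt1 : (1 < n./2)%N by lia.
have [m_odd | m_even] := boolP (odd n./2).
  rewrite n_eq cyc_eval_double_odd // totient_double_odd //.
  exact: cyc_eval_nonneg_lower.
have two_dvd : (2 %| n./2)%N by rewrite dvdn2.
rewrite n_eq !cyc_eval_primeM_dvd ?(ltnW m_gt1) // -sqrrN.
rewrite -cyc_eval_primeM_dvd ?(ltnW m_gt1) // -n_eq.
exact: cyc_eval_nonneg_lower.
Qed.
End UnitIntervalBounds.

Lemma is_cyc_inf_attained (R : rcfType) n (c t0 : R) :
  (forall t, c <= cyc_eval n t) -> cyc_eval n t0 = c -> is_cyc_inf n c.
Proof. by move=> lower attained; split=> // c' lower'; rewrite -attained. Qed.

Lemma cyc_eval3_at_neg_half (R : rcfType) : cyc_eval 3 (- (1 / 2)) = 3 / 4 :> R.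
Proof.
by rewrite cyc_eval_prime // !big_ord_recr big_ord0 /= !expr0 expr1 expr2; lra.
Qed.

Lemma cyc_eval6_at_half (R : rcfType) : cyc_eval 6 (1 / 2) = 3 / 4 :> R.
Proof. by rewrite (_ : 6 = 2 * 3)%N // cyc_eval_double_odd // cyc_eval3_at_neg_half. Qed.

Theorem proposition4p3 (R : rcfType) :
  (forall (n : nat) (c : R), (3 <= n)%N -> is_cyc_inf n c ->
     (Num.sqrt 3 / 2) ^+ totient n <= c) /\
  is_cyc_inf 3 ((Num.sqrt (3 : R) / 2) ^+ totient 3) /\
  is_cyc_inf 6 ((Num.sqrt (3 : R) / 2) ^+ totient 6).
Proof.
have totient3 : totient 3 = 2%N by rewrite totient_prime.
have totient6 : totient 6 = 2%N by rewrite (totient_double_odd (m := 3)).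
split; first by move=> n c n_ge3 [_ greatest]; apply: greatest => t; exact: cyc_eval_lower.
split; apply: is_cyc_inf_attained => [t | ]; rewrite ?cyc_eval_lower //.
  by rewrite totient3 th_sqr; exact: cyc_eval3_at_neg_half.
by rewrite totient6 th_sqr; exact: cyc_eval6_at_half.
Qed.
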